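(* Let $q \ge 2$, $n$ and $t$ be positive integers with $t \le 10\sqrt{n}$. For every integer $k\ge 0$ with $2k+2\le n$, \[ W_q(n,t, 2k+2) \leq W_q(n,t, 2k+1) \le 2\left(\frac{q^2t}{(q-1)n}\right)^{k} W_q(n,t,1) \le 2\left(\frac{q^2t}{(q-1)n}\right)^{k+1}V_q(n,t). \]
   Context: $V_q(m,r) = \sum_{j=0}^{r}\binom{m}{j}(q-1)^j$ (with $V_q(m,r)=0$ for $r<0$). For $x\in[q]^n$, $B_q(x,r)=\{y\in[q]^n : d(x,y)\le r\}$, where $d$ is the Hamming distance. For $0\le k\le n$, $W_q(n,t,k)$ denotes $|B_q(x,t)\cap B_q(y,t)|$ for any $x,y\in[q]^n$ with $d(x,y)=k$ (this does not depend on the choice of $x,y$). *)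

From mathcomp Require Import all_boot all_order all_algebra.
Set Implicit Arguments. Unset Strict Implicit. Unset Printing Implicit Defensive.

Definition word (q n : nat) := {ffun 'I_n -> 'I_q}.

Definition hdist (q n : nat) (x y : word q n) : nat := #|[set i | x i != y i]|.

Definition Vq (q m r : nat) : nat := \sum_(0 <= j < r.+1) 'C(m, j) * (q - 1) ^ j.

Definition ball_inter (q n t : nat) (x y : word q n) : nat :=
  #|[set z : word q n | (hdist x z <= t) && (hdist y z <= t)]|.

(* W_q(n,t,k): the intersection size for some (any) pair x,y with d(x,y)=k;
   the paper notes this does not depend on the choice.  If no such pair exists,
   we set it to 0 (never happens for k <= n, q >= 2). *)
Definition Wq (q n t k : nat) : nat :=
  match [pick p : word q n * word q n | hdist p.1 p.2 == k] with
  | Some p => ball_inter t p.1 p.2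
  | None => 0
  end.

(* W_q(n,t,m) only depends on m, so it may be computed on a pair x, y that
   differs exactly on its first m coordinates.  A word in both balls then has at
   most t - m/2 disagreements with x on the remaining n - m coordinates, and any
   such pattern occurs when m + s <= t; hence W(1) = q V_q(n-1,t-1) and
   W(2k+1) <= q^(2k+1) V_q(n-2k-1,t-k-1).  When 2t < n, the latter sum is
   compared term by term with V_q(n-1,t-1) through the binomial ratio
   C(b+2,a+1) / C(b,a); this case contains every case where the ratio
   c = q^2 t / ((q-1) n) is below 1, and otherwise the bound follows from W
   being nonincreasing in the distance. *)

From mathcomp Require Import all_boot all_order all_algebra perm zify.
Import Order.TTheory GRing.Theory Num.Theory.
Set Implicit Arguments. Unset Strict Implicit. Unset Printing Implicit Defensive.

Section HammingDistance.
Variables (q n : nat).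
Implicit Types x y z : word q n.

Lemma hdistE x y : hdist x y = \sum_(i < n) (x i != y i).
Proof. by rewrite /hdist -sum1dep_card big_mkcond. Qed.

Lemma hdistC x y : hdist x y = hdist y x.
Proof. by apply: eq_card => i; rewrite !inE eq_sym. Qed.

Lemma hdist_eq0 x y : (hdist x y == 0) = (x == y).
Proof.
rewrite cards_eq0; apply/eqP/eqP => [xy0 | -> //]; last first.
  by apply/setP => i; rewrite !inE eqxx.
apply/ffunP => i; apply/eqP; apply: contraT => xy_i.
by have := in_set0 i; rewrite -xy0 inE xy_i.
Qed.

Lemma hdistxx x : hdist x x = 0.
Proof. by apply/eqP; rewrite hdist_eq0. Qed.

Lemma hdist_max x y : hdist x y <= n.
Proof. by rewrite -[n in _ <= n]card_ord max_card. Qed.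

Lemma hdist_triangle x y z : hdist x y <= hdist x z + hdist z y.
Proof.
apply: leq_trans (leq_card_setU [set i | x i != z i] [set i | z i != y i]).
apply: subset_leq_card; apply/subsetP => i; rewrite !inE.
by case: (eqVneq (x i) (z i)) => [->|].
Qed.

End HammingDistance.

Lemma hdist1 q (x y : word q 1) : hdist x y = (x != y).
Proof.
by have := hdist_max x y; rewrite -hdist_eq0; case: (hdist x y) => [|[]].
Qed.

Section WordSplit.
Variables (q m N : nat).

Definition wleft (z : word q (m + N)) : word q m := [ffun i => z (lshift N i)].
Definition wright (z : word q (m + N)) : word q N := [ffun i => z (rshift m i)].
Definition wcat (u : word q m) (v : word q N) : word q (m + N) :=
  [ffun i => match split i with inl a => u a | inr b => v b end].

Lemma wcatKl u v : wleft (wcat u v) = u.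
Proof. by apply/ffunP=> i; rewrite !ffunE (unsplitK (inl _ i)). Qed.

Lemma wcatKr u v : wright (wcat u v) = v.
Proof. by apply/ffunP=> i; rewrite !ffunE (unsplitK (inr _ i)). Qed.

Lemma wsplitK z : wcat (wleft z) (wright z) = z.
Proof. by apply/ffunP=> i; rewrite !ffunE; case: split_ordP => j ->; rewrite ffunE. Qed.

Lemma hdist_split x y :
  hdist x y = hdist (wleft x) (wleft y) + hdist (wright x) (wright y).
Proof.
by rewrite !hdistE big_split_ord; congr (_ + _); apply: eq_bigr => i _; rewrite !ffunE.
Qed.

Lemma card_split (P : pred (word q m)) (Q : pred (word q N)) :
  #|[set z | P (wleft z) && Q (wright z)]| = #|[set u | P u]| * #|[set v | Q v]|.
Proof.
rewrite -cardsX -(card_imset _ (f := fun p => wcat p.1 p.2)); last first.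
  move=> [u v] [u' v'] /= E.
  by move: (congr1 wleft E) (congr1 wright E); rewrite !wcatKl !wcatKr => -> ->.
apply: eq_card => z; rewrite inE; apply/idP/imsetP => [PQz | [[u v]]].
  by exists (wleft z, wright z); rewrite ?inE ?wsplitK.
by rewrite !inE /= => /andP[Pu Qv] ->; rewrite wcatKl wcatKr Pu Qv.
Qed.

End WordSplit.

Lemma card_word q n : #|word q n| = q ^ n.
Proof. by rewrite card_ffun !card_ord. Qed.

Lemma Vq_len0 q s : Vq q 0 s = 1.
Proof. by rewrite /Vq big_nat_recl // bin0 big1_seq ?addn0. Qed.

Lemma Vq_rad0 q N : Vq q N 0 = 1.
Proof. by rewrite /Vq big_nat1 bin0. Qed.

Lemma VqSS q N s : Vq q N.+1 s.+1 = Vq q N s.+1 + (q - 1) * Vq q N s.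
Proof.
rewrite /Vq big_nat_recl // [in X in _ = X + _]big_nat_recl // !bin0 -addnA.
congr (_ + _); rewrite big_distrr -big_split; apply: eq_bigr => j _.
by rewrite binS mulnDl expnS; congr (_ + _); rewrite mulnCA.
Qed.

Lemma card_ball0 q N (c : word q N) : #|[set w | hdist c w <= 0]| = 1.
Proof.
by rewrite -(cards1 c); apply: eq_card => w; rewrite !inE leqn0 hdist_eq0 eq_sym.
Qed.

Lemma card_ballS q N s (c : word q (1 + N)) :
  #|[set w | hdist c w <= s.+1]| =
  #|[set v | hdist (wright c) v <= s.+1]| + (q - 1) * #|[set v | hdist (wright c) v <= s]|.
Proof.
rewrite -(cardsID [set w | wleft w == wleft c]).
have -> : [set w | hdist c w <= s.+1] :&: [set w | wleft w == wleft c] =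
          [set w | pred1 (wleft c) (wleft w) && (hdist (wright c) (wright w) <= s.+1)].
  by apply/setP => w; rewrite !inE hdist_split hdist1 eq_sym; case: eqP => _; rewrite /= ?andbT ?andbF.
have -> : [set w | hdist c w <= s.+1] :\: [set w | wleft w == wleft c] =
          [set w | (wleft w != wleft c) && (hdist (wright c) (wright w) <= s)].
  by apply/setP => w; rewrite !inE hdist_split hdist1 eq_sym; case: eqP => _; rewrite /= ?andbT ?andbF.
rewrite (card_split (pred1 (wleft c)) (fun v => hdist (wright c) v <= s.+1)).
rewrite (card_split (predC1 (wleft c)) (fun v => hdist (wright c) v <= s)).
have -> : #|[set u | pred1 (wleft c) u]| = 1.
  by apply: etrans (cards1 (wleft c)); apply: eq_card => u; rewrite !inE.
have -> : #|[set u | predC1 (wleft c) u]| = q - 1.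
  transitivity #|[set~ wleft c]|; first by apply: eq_card => u; rewrite !inE.
  by rewrite cardsC1 card_word subn1.
by rewrite mul1n.
Qed.

Lemma card_ball q N s (c : word q N) : #|[set w | hdist c w <= s]| = Vq q N s.
Proof.
elim: N s c => [|N IH] [|s] c; rewrite ?card_ball0 ?Vq_rad0 //.
  rewrite Vq_len0; apply: etrans (cards1 c); apply: eq_card => w.
  have -> : w = c by apply/ffunP => -[].
  by rewrite !inE hdistxx eqxx.
by rewrite (@card_ballS q N s c) VqSS !IH.
Qed.

Lemma perm_card_eq (T : finType) (A B : {set T}) : #|A| = #|B| ->
  exists s : {perm T}, forall i, (s i \in A) = (i \in B).
Proof.
elim: {A}_.+1 {-2}A (ltnSn #|A :\: B|) => // K IH A AB_K AB.
have [AB0 | [a Aa]] := set_0Vmem (A :\: B).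
  have -> : A = B by apply/eqP; rewrite eqEcard -setD_eq0 AB0 eqxx AB leqnn.
  by exists 1%g => i; rewrite perm1.
have [b Bb] : exists b, b \in B :\: A.
  apply/card_gt0P; have := cardsID B A; have := cardsID A B.
  have : 0 < #|A :\: B| by apply/card_gt0P; exists a.
  by rewrite setIC AB; lia.
move: Aa Bb; rewrite !inE => /andP[aB aA] /andP[bA bB].
set A' := tperm a b @^-1: A.
have A'B : #|A'| = #|B| by rewrite card_preimset ?AB //; apply: perm_inj.
have A'B_sub : A' :\: B \subset (A :\: B) :\ a.
  apply/subsetP => j; rewrite !inE => /andP[jB].
  case: tpermP => [ja | jb | /eqP ja /eqP jb]; first by rewrite (negbTE bA).
    by rewrite jb bB in jB.
  by move=> ->; rewrite jB ja.
have [s As] : exists s : {perm T}, forall i, (s i \in A') = (i \in B).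
  apply: IH A'B; apply: leq_ltn_trans (subset_leq_card A'B_sub) _.
  by move: AB_K; rewrite (cardsD1 a (A :\: B)) !inE aB aA; lia.
by exists (s * tperm a b)%g => i; rewrite permM -As inE.
Qed.

Section DistanceInvariance.
Variables (q n t : nat) (x y x' y' : word q n).
Hypothesis dxy : hdist x y = hdist x' y'.

Lemma ball_inter_hdist : ball_inter t x y = ball_inter t x' y'.
Proof.
(* An isometry sending (x, y) to (x', y'): permute the positions so that the
   disagreement sets match, then in each position permute the alphabet. *)
have [s Es] := perm_card_eq dxy.
pose b i := tperm (x (s i)) (x' i) (y (s i)).
pose sigma i := (tperm (x (s i)) (x' i) * tperm (b i) (y' i))%g.
pose phi (z : word q n) : word q n := [ffun i => sigma i (z (s i))].
have phi_iso z w : hdist (phi z) (phi w) = hdist z w.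
  rewrite /hdist -[RHS](card_preimset _ (@perm_inj _ s)).
  by apply: eq_card => i; rewrite !inE !ffunE (inj_eq perm_inj).
have phi_inj : injective phi.
  by move=> z w E; apply/eqP; rewrite -hdist_eq0 -phi_iso E hdistxx.
have phi_x : phi x = x'.
  apply/ffunP => i; rewrite ffunE permM tpermL.
  have := Es i; rewrite !inE.
  case: (eqVneq (x' i) (y' i)) => [x'y'_i /negbFE/eqP xy_i | x'y'_i xy_i].
    by rewrite /b -xy_i tpermL x'y'_i tpermL.
  rewrite tpermD // 1?eq_sym //; apply: contra xy_i => /eqP bx'.
  by rewrite -(inj_eq (@perm_inj _ (tperm (x (s i)) (x' i)))) tpermL -/(b i) bx'.
have phi_y : phi y = y'.
  by apply/ffunP => i; rewrite ffunE permM -/(b i) tpermL.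
rewrite /ball_inter -[RHS](card_preimset _ phi_inj).
by apply: eq_card => z; rewrite !inE -{1}phi_x -{1}phi_y !phi_iso.
Qed.

End DistanceInvariance.

Lemma WqE q n t m (x y : word q n) : hdist x y = m -> Wq q n t m = ball_inter t x y.
Proof.
move=> dxy; rewrite /Wq; case: pickP => [p /eqP dp | no_pair].
  by apply: ball_inter_hdist; rewrite dp dxy.
by have := no_pair (x, y); rewrite /= dxy eqxx.
Qed.

Section SplitPair.
Variables (q m N t : nat) (x y : word q (m + N)).
Hypotheses (xy_right : wright x = wright y) (xy_left : hdist (wleft x) (wleft y) = m).

Lemma ball_inter_wright z : hdist x z <= t -> hdist y z <= t ->
  m + 2 * hdist (wright x) (wright z) <= 2 * t.
Proof.
rewrite !hdist_split -xy_right => xz yz.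
have := hdist_triangle (wleft x) (wleft y) (wleft z).
by rewrite xy_left [hdist (wleft z) _]hdistC; lia.
Qed.

Lemma ball_inter_eq0 : 2 * t < m -> ball_inter t x y = 0.
Proof.
move=> tm; apply/eqP; rewrite cards_eq0; apply/eqP/setP => z; rewrite !inE.
by apply/negbTE/negP => /andP[xz yz]; have := ball_inter_wright xz yz; lia.
Qed.

Lemma ball_inter_le s : (forall h, m + 2 * h <= 2 * t -> h <= s) ->
  ball_inter t x y <= q ^ m * Vq q N s.
Proof.
move=> le_s; rewrite -card_word -(card_ball s (wright x)) -cardsT.
rewrite -(card_split predT (fun v => hdist (wright x) v <= s)).
apply: subset_leq_card; apply/subsetP => z; rewrite !inE => /andP[xz yz].
exact/le_s/ball_inter_wright.
Qed.

Lemma ball_inter_ge s : m + s <= t -> q ^ m * Vq q N s <= ball_inter t x y.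
Proof.
move=> mst; rewrite -card_word -(card_ball s (wright x)) -cardsT.
rewrite -(card_split predT (fun v => hdist (wright x) v <= s)).
apply: subset_leq_card; apply/subsetP => z; rewrite !inE !hdist_split -xy_right /=.
by have := hdist_max (wleft x) (wleft z); have := hdist_max (wleft y) (wleft z); lia.
Qed.

End SplitPair.

Lemma exists_split_pair q m N : 1 < q -> exists x y : word q (m + N),
  [/\ wright x = wright y, hdist (wleft x) (wleft y) = m & hdist x y = m].
Proof.
move=> q_gt1; pose a0 : 'I_q := Ordinal (ltnW q_gt1); pose a1 : 'I_q := Ordinal q_gt1.
pose x : word q (m + N) := [ffun _ => a0].
pose y : word q (m + N) := wcat [ffun _ => a1] [ffun _ => a0].
have xy_right : wright x = wright y by rewrite wcatKr; apply/ffunP => i; rewrite !ffunE.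
have xy_left : hdist (wleft x) (wleft y) = m.
  by rewrite wcatKl -[RHS](card_ord m); apply: eq_card => i; rewrite !inE !ffunE.
by exists x, y; rewrite hdist_split xy_left xy_right hdistxx addn0.
Qed.

Section MoveOneCoordinate.
Variables (q n : nat) (i : 'I_n).

Definition wset (y : word q n) (a : 'I_q) : word q n :=
  [ffun j => if j == i then a else y j].

Definition hdist_off (u v : word q n) := #|[set j | (j != i) && (u j != v j)]|.

Lemma wset_id y a : wset y a i = a.
Proof. by rewrite ffunE eqxx. Qed.

Lemma hdist_offE u v : hdist u v = (u i != v i) + hdist_off u v.
Proof. by rewrite /hdist (cardsD1 i) inE; congr (_ + _); apply: eq_card => j; rewrite !inE. Qed.

Lemma hdist_off_wsetl u v a : hdist_off (wset u a) v = hdist_off u v.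
Proof. by apply: eq_card => j; rewrite !inE ffunE; case: eqP. Qed.

Lemma hdist_off_wsetr u v a : hdist_off u (wset v a) = hdist_off u v.
Proof. by apply: eq_card => j; rewrite !inE ffunE; case: eqP. Qed.

Variables (t : nat) (x y : word q n).
Hypothesis xy_i : x i != y i.

Lemma hdist_wset : hdist x y = (hdist x (wset y (x i))).+1.
Proof. by rewrite !hdist_offE hdist_off_wsetr wset_id eqxx (negbTE xy_i). Qed.

(* Moving y one step towards x keeps the points of the intersection that stay
   in the ball around the new centre; those that leave it agree with y at i and
   are put back by exchanging the letters x i and y i at position i. *)
Lemma ball_inter_wset : ball_inter t x y <= ball_inter t x (wset y (x i)).
Proof.
set y' := wset y (x i); set S := [set z | (hdist x z <= t) && (hdist y z <= t)].
pose sw z := wset z (tperm (x i) (y i) (z i)).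
have sw_inj : injective sw.
  move=> z w /ffunP zw; apply/ffunP => j; have := zw j; rewrite !ffunE.
  by case: eqP => // -> /perm_inj.
have swapped z : z \in S -> ~~ (hdist y' z <= t) ->
    [/\ sw z \notin S, hdist x (sw z) <= t & hdist y' (sw z) <= t].
  rewrite inE => /andP[xz yz] y'z.
  have [yz_i off_yz] : y i = z i /\ hdist_off y z = t.
    move: yz y'z; rewrite !hdist_offE hdist_off_wsetl wset_id.
    case: (eqVneq (x i) (z i)) => _ /=; first lia.
    case: (eqVneq (y i) (z i)) => [-> | _] /=; last lia.
    by split; last lia.
  rewrite inE !hdist_offE /sw /y' !hdist_off_wsetr hdist_off_wsetl !wset_id.
  rewrite -yz_i tpermR eqxx eq_sym (negbTE xy_i) /=; split; try lia.
  by apply: leq_trans xz; rewrite hdist_offE leq_addl.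
rewrite /ball_inter -/S -(card_in_imset (f := fun z => if hdist y' z <= t then z else sw z)).
  apply: subset_leq_card; apply/subsetP => _ /imsetP[z Sz ->]; case: ifPn => y'z.
    by move: Sz; rewrite !inE y'z => /andP[-> _].
  by have [_ xw y'w] := swapped z Sz y'z; rewrite inE xw y'w.
move=> z w Sz Sw /=; case: ifPn => y'z; case: ifPn => y'w; last exact: sw_inj.
- done.
- by move=> zw; have [] := swapped w Sw y'w; rewrite -zw Sz.
- by move=> zw; have [] := swapped z Sz y'z; rewrite zw Sw.
Qed.

End MoveOneCoordinate.

Lemma Wq_succ_le q n t m : 1 < q -> m < n -> Wq q n t m.+1 <= Wq q n t m.
Proof.
move=> q_gt1 mn; have [N ->] : exists N, n = m.+1 + N by exists (n - m.+1); rewrite subnKC.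
have [x [y [_ _ dxy]]] := exists_split_pair m.+1 N q_gt1.
have /card_gt0P[i] : 0 < hdist x y by rewrite dxy.
rewrite inE => xy_i; have dxy' : hdist x (wset i y (x i)) = m.
  by have := hdist_wset xy_i; rewrite dxy => -[].
by rewrite (WqE t dxy) (WqE t dxy'); apply: ball_inter_wset.
Qed.

Lemma Wq_le q n t m m' : 1 < q -> m <= m' <= n -> Wq q n t m' <= Wq q n t m.
Proof.
move=> q_gt1 /andP[]; elim: m' => [|m' IH]; first by rewrite leqn0 => /eqP ->.
rewrite leq_eqVlt => /orP[/eqP -> // | mm'] m'n.
exact: leq_trans (Wq_succ_le t q_gt1 m'n) (IH mm' (ltnW m'n)).
Qed.

Lemma Wq_eq0 q n t m : 1 < q -> 2 * t < m -> m <= n -> Wq q n t m = 0.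
Proof.
move=> q_gt1 tm mn; have [N ->] : exists N, n = m + N by exists (n - m); rewrite subnKC.
have [x [y [xy_r xy_l dxy]]] := exists_split_pair m N q_gt1.
by rewrite (WqE t dxy) (ball_inter_eq0 xy_r xy_l).
Qed.

Lemma Wq1E q n t : 1 < q -> 0 < n -> 0 < t -> Wq q n t 1 = q * Vq q (n - 1) (t - 1).
Proof.
move=> q_gt1 n_gt0 t_gt0.
have [N ->] : exists N, n = 1 + N by exists (n - 1); rewrite subnKC.
have [x [y [xy_r xy_l dxy]]] := exists_split_pair 1 N q_gt1.
rewrite (WqE t dxy) addKn -[q in q * _]expn1; apply/eqP; rewrite eqn_leq.
by rewrite (ball_inter_le xy_r xy_l) ?(ball_inter_ge xy_r xy_l) //; lia.
Qed.

Lemma Wq_odd_le q n t k : 1 < q -> 2 * k + 1 <= n ->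
  Wq q n t (2 * k + 1) <= q ^ (2 * k + 1) * Vq q (n - (2 * k + 1)) (t - k - 1).
Proof.
move=> q_gt1 kn; have [N ->] : exists N, n = 2 * k + 1 + N.
  by exists (n - (2 * k + 1)); rewrite subnKC.
have [x [y [xy_r xy_l dxy]]] := exists_split_pair (2 * k + 1) N q_gt1.
by rewrite (WqE t dxy) addKn; apply: (ball_inter_le xy_r xy_l) => h; lia.
Qed.

Lemma bin_shift2 a b : b.+2 * b.+1 * 'C(b, a) = a.+1 * (b.+1 - a) * 'C(b.+2, a.+1).
Proof.
rewrite -mulnA (mul_bin_down b.+1 a) mulnCA (mul_bin_diag b.+2 a).
by rewrite mulnCA mulnA.
Qed.

Lemma leq_bin_shift2 r s a b :
  r * a.+1 <= s * b.+1 -> r * 'C(b, a) <= s * 'C(b.+2, a.+1).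
Proof.
move=> rs; rewrite -(@leq_pmul2l (b.+2 * b.+1)) // mulnCA bin_shift2.
have := leq_mul (leq_mul rs (_ : b.+1 - a <= b.+2)) (leqnn 'C(b.+2, a.+1)).
by move/(_ ltac:(lia)); lia.
Qed.

Lemma leq_bin_shift2_iter r s k a b :
  (forall l, l < k -> r * (a + l).+1 <= s * (b + 2 * l).+1) ->
  r ^ k * 'C(b, a) <= s ^ k * 'C(b + 2 * k, a + k).
Proof.
elim: k a b => [|k IH] a b rs; first by rewrite !muln0 !addn0.
have step : r * 'C(b, a) <= s * 'C(b.+2, a.+1).
  by apply: leq_bin_shift2; have := rs 0 (ltn0Sn k); rewrite !addn0.
have rest : r ^ k * 'C(b.+2, a.+1) <= s ^ k * 'C(b.+2 + 2 * k, a.+1 + k).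
  apply: IH => l lk; have := rs l.+1 lk.
  by rewrite -addSnnS (_ : b + 2 * l.+1 = b.+2 + 2 * l) //; lia.
rewrite (_ : b + 2 * k.+1 = b.+2 + 2 * k) 1?(_ : a + k.+1 = a.+1 + k); try lia.
rewrite expnSr -mulnA; apply: leq_trans (leq_mul (leqnn _) step) _.
by rewrite mulnCA expnSr [s ^ k * s]mulnC -mulnA leq_mul.
Qed.

Lemma leq_bin_shift n t k j : 2 * t <= n -> 2 * k + 1 <= n -> j + k < t ->
  n ^ k * 'C(n - (2 * k + 1), j) <= t ^ k * 'C(n - 1, j + k).
Proof.
move=> tn kn jkt; rewrite (_ : n - 1 = n - (2 * k + 1) + 2 * k); last by lia.
apply: leq_bin_shift2_iter => l lk; set e := k - l.
rewrite (_ : (n - (2 * k + 1) + 2 * l).+1 = n - 2 * e); last by rewrite /e; lia.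
have le_te : (j + l).+1 <= t - e by rewrite /e; lia.
have te_ne : t * (2 * e) <= n * e by rewrite mulnA (mulnC t) leq_mul2r tn orbT.
apply: leq_trans (_ : n * (t - e) <= _); first by rewrite leq_mul2l le_te orbT.
by rewrite !mulnBr; lia.
Qed.

Lemma Vq_shift_le q n t k : 2 * t <= n -> 2 * k + 1 <= n -> k < t ->
  ((q - 1) * n) ^ k * Vq q (n - (2 * k + 1)) (t - k - 1) <= t ^ k * Vq q (n - 1) (t - 1).
Proof.
move=> tn kn kt; pose F j := 'C(n - 1, j) * (q - 1) ^ j.
have -> : Vq q (n - 1) (t - 1) = \sum_(0 <= j < t) F j by rewrite /Vq subn1 prednK //; lia.
rewrite (@big_cat_nat _ _ _ k) //=; last exact: ltnW.
rewrite mulnDr; apply: leq_trans (leq_addl _ _).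
have -> : \sum_(k <= j < t) F j = \sum_(0 <= j < t - k) F (j + k).
  by rewrite -{1}[k]add0n big_addn.
rewrite /Vq (_ : (t - k - 1).+1 = t - k); last by lia.
rewrite !big_distrr big_nat_cond [X in _ <= X]big_nat_cond /=.
apply: leq_sum => j /andP[jkt _]; rewrite /F expnMn expnD.
have jk_t : j + k < t by lia.
by have := leq_mul (leqnn ((q - 1) ^ j * (q - 1) ^ k)) (leq_bin_shift tn kn jk_t); lia.
Qed.

Lemma Vq_pred_le q n t : 0 < n -> 0 < t ->
  (q - 1) * n * Vq q (n - 1) (t - 1) <= t * Vq q n t.
Proof.
move=> n_gt0 t_gt0; rewrite /Vq !subn1 prednK // big_nat_recl //= mulnDr.
apply: leq_trans (leq_addl _ _); rewrite !big_distrr /= !big_mkord.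
apply: leq_sum => j _.
have -> : q.-1 * n * ('C(n.-1, j) * q.-1 ^ j) = n * 'C(n.-1, j) * q.-1 ^ j.+1.
  by rewrite expnS; lia.
by rewrite mul_bin_diag -mulnA leq_mul.
Qed.

Lemma Wq1_le q n t : 1 < q -> 0 < n -> 0 < t ->
  Wq q n t 1 * ((q - 1) * n) <= q ^ 2 * t * Vq q n t.
Proof.
move=> q_gt1 n_gt0 t_gt0; rewrite Wq1E //.
have := leq_mul (leqnn q) (Vq_pred_le q n_gt0 t_gt0).
have := leq_mul (leq_pexp2l (ltnW q_gt1) (isT : 1 <= 2)) (leqnn (t * Vq q n t)).
by lia.
Qed.

Lemma Wq_odd_ratio q n t k : 1 < q -> 0 < n -> 0 < t -> 2 * k + 1 <= n ->
  Wq q n t (2 * k + 1) * ((q - 1) * n) ^ k <= (q ^ 2 * t) ^ k * Wq q n t 1.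
Proof.
move=> q_gt1 n_gt0 t_gt0 kn.
have [c_ge1 | c_lt1] := leqP ((q - 1) * n) (q ^ 2 * t).
  rewrite mulnC; apply: leq_mul; last by apply: Wq_le; lia.
  by elim: k {kn} => // k IH; rewrite [_ ^ k.+1]expnS [X in _ <= X]expnS; exact: leq_mul.
have tn : 2 * t < n.
  have : (q - 1) * (2 * t) < (q - 1) * n.
    apply: leq_ltn_trans c_lt1; rewrite mulnA leq_mul2r; apply/orP; right.
    by rewrite expnS expn1; nia.
  by rewrite ltn_mul2l => /andP[].
have [kt | tk] := ltnP k t; last by rewrite Wq_eq0 //; lia.
apply: leq_trans (leq_mul (Wq_odd_le t q_gt1 kn) (leqnn (((q - 1) * n) ^ k))) _.
rewrite Wq1E // expnD expn1 [(q ^ 2 * t) ^ k]expnMn -expnM.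
have := leq_mul (leqnn (q ^ (2 * k) * q)) (Vq_shift_le q (ltnW tn) kn kt).
by lia.
Qed.

Local Open Scope ring_scope.

Lemma ler_nat_divM (R : numFieldType) (a b N D : nat) : (0 < D)%N ->
  (a * D <= N * b)%N -> a%:R <= N%:R / D%:R * b%:R :> R.
Proof. by move=> D_gt0 le_aD; rewrite mulrAC ler_pdivlMr ?ltr0n // -!natrM ler_nat. Qed.

Theorem lemma3p4 (R : rcfType) (q n t k : nat) :
  (2 <= q)%N -> (0 < n)%N -> (0 < t)%N ->
  (t%:R : R) <= 10 * Num.sqrt (n%:R) ->
  (2 * k + 2 <= n)%N ->
  let c : R := (q ^ 2 * t)%:R / ((q - 1) * n)%:R in
  [/\ (Wq q n t (2 * k + 2))%:R <= (Wq q n t (2 * k + 1))%:R :> R,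
      (Wq q n t (2 * k + 1))%:R <= 2 * c ^+ k * (Wq q n t 1)%:R
    & 2 * c ^+ k * (Wq q n t 1)%:R <= 2 * c ^+ k.+1 * (Vq q n t)%:R].
Proof.
move=> q_gt1 n_gt0 t_gt0 _ kn c.
have D_gt0 : (0 < (q - 1) * n)%N by rewrite muln_gt0 n_gt0 subn_gt0 q_gt1.
have ck_ge0 : 0 <= c ^+ k by rewrite exprn_ge0 ?divr_ge0.
split.
- rewrite ler_nat (_ : 2 * k + 2 = (2 * k + 1).+1)%N; last by lia.
  by apply: Wq_succ_le => //; lia.
- apply: (@le_trans _ _ (c ^+ k * (Wq q n t 1)%:R)).
    rewrite /c expr_div_n -!natrX; apply: ler_nat_divM; first by rewrite expn_gt0 D_gt0.
    by apply: Wq_odd_ratio => //; lia.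
  by rewrite -mulrA ler_peMl ?mulr_ge0 ?ler1n.
- have W1_le : (Wq q n t 1)%:R <= c * (Vq q n t)%:R.
    by apply: ler_nat_divM => //; apply: Wq1_le.
  by rewrite exprSr mulrA -(mulrA (2 * c ^+ k)); apply: ler_wpM2l W1_le; rewrite mulr_ge0.
Qed.
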